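(* Let $(L,\omega,\upsilon)$ be a generalized indefinite string of class $\mathcal F$ with associated $R>0$. Then there exist $\varepsilon>0$ and a positive constant $c$ such that, as $y\to+\infty$, \[ \frac{\theta^{[1]}(\mathrm iy,R)}{\mathrm iy\,\theta(\mathrm iy,R)}=-\mathrm ic+\mathcal O(e^{-\varepsilon y}),\qquad\frac{\phi^{[1]}(\mathrm iy,R)}{\mathrm iy\,\phi(\mathrm iy,R)}=-\mathrm ic+\mathcal O(e^{-\varepsilon y}). \]
   Context: A generalized indefinite string is a triple $(L,\omega,\upsilon)$ with $L\in(0,\infty]$, $\omega$ a real distribution in $H^{-1}_{\mathrm{loc}}[0,L)$ and $\upsilon$ a non-negative Borel measure on $[0,L)$; $\mathsf w\in L^2_{\mathrm{loc}}[0,L)$ is the unique real function with $\omega(h)=-\int_0^L\mathsf w h'\,dx$ for compactly supported $h\in H^1[0,L)$; $\rho$ is the square root of the Radon--Nikodym derivative of $\upsilon$ and $\upsilon_{\mathrm s}$ its singular part (with respect to Lebesgue measure). A solution of $-f''=z\omega f+z^2\upsilon f$ is $f\in H^1_{\mathrm{loc}}[0,L)$ such that for some constant $f'(0-)$, $f'(0-)h(0)+\int_0^Lf'h'\,dx=z\omega(fh)+z^2\int fh\,d\upsilon$ for all such $h$. The fundamental system $\theta(z,\cdot),\phi(z,\cdot)$ consists of the solutions with $\theta(z,0)=1,\theta'(z,0-)=0,\phi(z,0)=0,\phi'(z,0-)=1$; quasi-derivatives $\theta^{[1]},\phi^{[1]}$ are the unique left-continuous functions equal a.e. to $\theta'+z\mathsf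 w\theta$, $\phi'+z\mathsf w\phi$. Class $\mathcal F$: $L=\infty$ and there is $R>0$ such that $\mathsf w=0$ a.e. on $[R,\infty)$; $\upsilon$ coincides on $[R,\infty)$ with the measure $dx/(1+2x)^2$; $\mathsf w$ and $\rho$ are a.e. equal to piecewise constant functions on $[0,R]$; $\upsilon_{\mathrm s}$ is supported on a finite set; and $\mathsf w=0$ and $\rho>0$ a.e. in a neighborhood of $R$. *)

From Stdlib Require Import Reals Lra.
Open Scope R_scope.

Definition Cx : Type := (R * R)%type.
Definition Cre (u : Cx) : R := fst u.
Definition Cim (u : Cx) : R := snd u.
Definition RtoC (x : R) : Cx := (x, 0).
Definition Cadd (u v : Cx) : Cx := (fst u + fst v, snd u + snd v).
Definition Copp (u : Cx) : Cx := (- fst u, - snd u).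
Definition Csub (u v : Cx) : Cx := Cadd u (Copp v).
Definition Cmul (u v : Cx) : Cx :=
  (fst u * fst v - snd u * snd v, fst u * snd v + snd u * fst v).
Definition Cnorm (u : Cx) : R := sqrt (fst u * fst u + snd u * snd u).
(* total inverse: inverse of 0 is 0 *)
Definition Cinv (u : Cx) : Cx :=
  let n2 := fst u * fst u + snd u * snd u in (fst u / n2, - snd u / n2).
Definition Cdiv (u v : Cx) : Cx := Cmul u (Cinv v).
Definition Ci : Cx := (0, 1).

Fixpoint Csum (n : nat) (F : nat -> Cx) : Cx :=
  match n with O => RtoC 0 | S m => Cadd (Csum m F) (F m) end.

Definition RInt (f : R -> R) (a b v : R) : Prop :=
  exists pr : Riemann_integrable f a b, RiemannInt pr = v.

Definition CInt (f : R -> Cx) (a b : R) (v : Cx) : Prop :=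
  RInt (fun x => fst (f x)) a b (fst v) /\ RInt (fun x => snd (f x)) a b (snd v).

(* L = infinity.  The measure upsilon is described by its Lebesgue decomposition
   upsilon = rho^2 dx + sum_{j < npts} masses j * delta_{pts j}
   (singular part supported on a finite set).  omega is determined by w via
   omega(h) = - int w h'. *)
Record classF : Type := {
  Rb : R;
  wf : R -> R;
  rho : R -> R;           (* sqrt of the Radon-Nikodym derivative of upsilon *)
  npts : nat;
  pts : nat -> R;
  masses : nat -> R;
  Rb_pos : 0 < Rb;
  rho_nonneg : forall x, 0 <= x -> 0 <= rho x;
  masses_nonneg : forall j, (j < npts)%nat -> 0 <= masses j;
  pts_range : forall j, (j < npts)%nat -> 0 <= pts j < Rb;
  w_tail : forall x, Rb < x -> wf x = 0;
  rho_tail : forall x, Rb < x -> rho x = / (1 + 2 * x);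
  piecewise_const : exists (n : nat) (t : nat -> R),
      t O = 0 /\ t n = Rb /\ (forall k, (k < n)%nat -> t k < t (S k)) /\
      (forall k, (k < n)%nat -> exists a b : R,
          forall x, t k < x < t (S k) -> wf x = a /\ rho x = b);
  near_Rb : exists d : R, 0 < d /\
      forall x, Rb - d < x < Rb -> wf x = 0 /\ 0 < rho x
}.

Definition H1loc (f fp : R -> Cx) : Prop :=
  forall x, 0 <= x -> CInt fp 0 x (Csub (f x) (f 0)).

(* f is a solution of  -f'' = z omega f + z^2 upsilon f  with f'(0-) = d *)
Definition is_solution (S : classF) (z : Cx) (f fp : R -> Cx) (d : Cx) : Prop :=
  H1loc f fp /\
  forall (h hp : R -> Cx) (K : R),
    0 <= K -> H1loc h hp -> (forall x, K <= x -> h x = RtoC 0) ->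
    exists A B D : Cx,
      CInt (fun x => Cmul (fp x) (hp x)) 0 K A /\
      CInt (fun x => Cmul (RtoC (wf S x))
                          (Cadd (Cmul (fp x) (h x)) (Cmul (f x) (hp x)))) 0 K B /\
      CInt (fun x => Cmul (RtoC (rho S x * rho S x)) (Cmul (f x) (h x))) 0 K D /\
      Cadd (Cmul d (h 0)) A =
      Cadd (Cmul z (Copp B))
           (Cmul (Cmul z z)
                 (Cadd D (Csum (npts S) (fun j =>
                     Cmul (RtoC (masses S j)) (Cmul (f (pts S j)) (h (pts S j))))))).

(* g is the quasi-derivative f^[1] = f' + z w f : left-continuous on (0,oo) and
   a.e. equal to f' + z w f (expressed through equality of all integrals) *)
Definition quasi_deriv (S : classF) (z : Cx) (f g : R -> Cx) : Prop :=
  (forall x, 0 < x -> forall e, 0 < e -> exists del, 0 < del /\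
      forall t, x - del < t < x -> Cnorm (Csub (g t) (g x)) < e) /\
  (forall a b, 0 <= a <= b -> exists J : Cx,
      CInt (fun t => Cmul (RtoC (wf S t)) (f t)) a b J /\
      CInt g a b (Cadd (Csub (f b) (f a)) (Cmul z J))).

(** Let [k = y b], where [b^2] is the constant density of the string on a
    potential-free interval [(s0, R)] containing no point masses.  On such
    an interval a solution [f] of the equation at [z = iy] satisfies
    [f'' = k^2 f] weakly (tested with tents), so by a maximum principle each
    of its components is [P e^(k (t - s)) + Q e^(-k (t - s))] on [[s, R]].
    Testing the equation with [conj f], cut off linearly between [s] and
    [R], gives the energy estimate [int_0^s |f'|^2 <= k (|P|^2 - |Q|^2)];
    together with a nondegeneracy argument for Dirichlet or Neumann data at
    [0] this yields [|Q| <= |P|] and [P <> 0].  The quasi-derivative at [R]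
    is the derivative of the exponential profile, and an explicit
    computation of the ratio with [X = e^(k (R - s))] gives the bound
    [4 b / X^2 = 4 b e^(-2 b (R - s) y)] on the distance to [-ib]. *)
From Pilot Require Import Defs.
From Stdlib Require Import Reals Lra Lia.
From Coquelicot Require Import Coquelicot.
(* The complex operations of [Defs] take precedence over Coquelicot's homonyms. *)
Import Defs.
Open Scope R_scope.

(** Coquelicot's [is_RInt] specialised to [R], stated with [+], [*] instead of
    the module operations [plus], [scal], so that [lra]/[ring] can read the
    values. *)

Lemma RInt_spec (f : R -> R) a b v : Defs.RInt f a b v <-> is_RInt f a b v.
Proof.
  split.
  - intros [pr <-]. rewrite <- RInt_Reals.
    exact (RInt_correct f a b (ex_RInt_Reals_1 _ _ _ pr)).
  - intros H. exists (ex_RInt_Reals_0 _ _ _ (ex_intro _ v H)).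
    rewrite <- RInt_Reals. apply is_RInt_unique; exact H.
Qed.

Lemma rint_unique (f : R -> R) a b (v w : R) : is_RInt f a b v -> is_RInt f a b w -> v = w.
Proof. intros Hv Hw. rewrite <- (is_RInt_unique _ _ _ _ Hv). now apply is_RInt_unique. Qed.

Lemma rint_eq_val (f : R -> R) a b (v w : R) : v = w -> is_RInt f a b v -> is_RInt f a b w.
Proof. now intros ->. Qed.

Lemma rint_add (f g : R -> R) a b (v w : R) :
  is_RInt f a b v -> is_RInt g a b w -> is_RInt (fun x => f x + g x) a b (v + w).
Proof. exact (is_RInt_plus f g a b v w). Qed.

Lemma rint_sub (f g : R -> R) a b (v w : R) :
  is_RInt f a b v -> is_RInt g a b w -> is_RInt (fun x => f x - g x) a b (v - w).
Proof. exact (is_RInt_minus f g a b v w). Qed.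

Lemma rint_scal (f : R -> R) a b c (v : R) : is_RInt f a b v -> is_RInt (fun x => c * f x) a b (c * v).
Proof. exact (is_RInt_scal f a b c v). Qed.

Lemma rint_chasles (f : R -> R) a b c (v w : R) :
  is_RInt f a b v -> is_RInt f b c w -> is_RInt f a c (v + w).
Proof. exact (is_RInt_Chasles f a b c v w). Qed.

Lemma rint_const (c a b : R) : is_RInt (fun _ => c) a b (c * (b - a)).
Proof.
  pose proof (is_RInt_const a b c) as K.
  unfold scal in K; simpl in K; unfold mult in K; simpl in K.
  now rewrite Rmult_comm.
Qed.

Lemma rint_ext (f g : R -> R) a b (v : R) : a <= b ->
  (forall x, a < x < b -> f x = g x) -> is_RInt f a b v -> is_RInt g a b v.
Proof.
  intros Hab He. apply is_RInt_ext. intros x Hx. apply He.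
  rewrite Rmin_left, Rmax_right in Hx by lra. exact Hx.
Qed.

Lemma rint_ext_val (f g : R -> R) a b (v w : R) : a <= b ->
  (forall x, a < x < b -> f x = g x) -> is_RInt f a b v -> is_RInt g a b w -> v = w.
Proof. intros Hab He Hf. apply rint_unique. exact (rint_ext f g a b v Hab He Hf). Qed.

Lemma rint_const_on (g : R -> R) a b c : a <= b ->
  (forall x, a < x < b -> g x = c) -> is_RInt g a b (c * (b - a)).
Proof.
  intros Hab Hg. apply (rint_ext (fun _ => c)); [exact Hab| |apply rint_const].
  intros x Hx. symmetry. now apply Hg.
Qed.

Lemma rint_const_on_val (g : R -> R) a b c (v : R) : a <= b ->
  (forall x, a < x < b -> g x = c) -> is_RInt g a b v -> v = c * (b - a).
Proof. intros Hab Hg Hv. apply (rint_unique g a b); auto using rint_const_on. Qed.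

Lemma rint_nonneg (f : R -> R) a b (v : R) : a <= b ->
  (forall x, a < x < b -> 0 <= f x) -> is_RInt f a b v -> 0 <= v.
Proof.
  intros Hab Hf Hv. rewrite <- (Rmult_0_l (b - a)).
  exact (is_RInt_le _ f a b _ v Hab (rint_const 0 a b) Hv Hf).
Qed.

Lemma rint_split (f : R -> R) a b c (v : R) : a <= b <= c -> is_RInt f a c v ->
  exists v1 v2 : R, is_RInt f a b v1 /\ is_RInt f b c v2 /\ v = v1 + v2.
Proof.
  intros Hb Hv.
  assert (E : ex_RInt f a c) by (exists v; exact Hv).
  pose proof (RInt_correct _ _ _ (ex_RInt_Chasles_1 _ _ _ _ Hb E)) as H1.
  pose proof (RInt_correct _ _ _ (ex_RInt_Chasles_2 _ _ _ _ Hb E)) as H2.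
  do 2 eexists. split; [exact H1|]. split; [exact H2|].
  exact (rint_unique f a c _ _ Hv (rint_chasles _ _ _ _ _ _ H1 H2)).
Qed.

Lemma rint_drop_zero_part (f : R -> R) a b c (v : R) : a <= b <= c ->
  (forall x, a < x < b -> f x = 0) -> is_RInt f a c v -> is_RInt f b c v.
Proof.
  intros Hb Hz Hv. destruct (rint_split f a b c v Hb Hv) as (v1 & v2 & H1 & H2 & ->).
  rewrite (rint_const_on_val f a b 0 v1 ltac:(lra) Hz H1). now rewrite Rmult_0_l, Rplus_0_l.
Qed.

Lemma rint_sub_interval (W : R -> R) a b c d : a <= c <= d -> d <= b ->
  (forall x, a < x < b -> 0 <= W x) -> is_RInt W a b 0 -> is_RInt W c d 0.
Proof.
  intros Hcd Hdb Hp I.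
  destruct (rint_split _ a c b _ ltac:(lra) I) as (v1 & v2 & I1 & I2 & E).
  destruct (rint_split _ c d b _ ltac:(lra) I2) as (v3 & v4 & I3 & I4 & E').
  assert (0 <= v1) by (eapply (rint_nonneg _ a c); [lra| |exact I1]; intros; apply Hp; lra).
  assert (0 <= v3) by (eapply (rint_nonneg _ c d); [lra| |exact I3]; intros; apply Hp; lra).
  assert (0 <= v4) by (eapply (rint_nonneg _ d b); [lra| |exact I4]; intros; apply Hp; lra).
  replace 0 with v3 by lra. exact I3.
Qed.

(** [part true] is the real part and [part false] the imaginary part; the
    analytic arguments below treat both components alike. *)
Definition part (c : bool) (u : Cx) : R := if c then fst u else snd u.

Lemma part_add c u v : part c (Cadd u v) = part c u + part c v.
Proof. destruct c; simpl; ring. Qed.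

Lemma part_sub c u v : part c (Csub u v) = part c u - part c v.
Proof. destruct c; simpl; ring. Qed.

Lemma part_mul_real_r c u r : part c (Cmul u (RtoC r)) = part c u * r.
Proof. destruct c; simpl; ring. Qed.

Lemma part_mul_real_l c u r : part c (Cmul (RtoC r) u) = r * part c u.
Proof. destruct c; simpl; ring. Qed.

Lemma part_mul_sq_imag c y u : part c (Cmul (Cmul (0, y) (0, y)) u) = - (y * y) * part c u.
Proof. destruct c; simpl; ring. Qed.

Lemma part_le_norm c u : Rabs (part c u) <= Cnorm u.
Proof.
  unfold Cnorm. rewrite <- sqrt_Rsqr_abs. apply sqrt_le_1_alt. unfold Rsqr.
  destruct c; simpl; nra.
Qed.

Lemma Cx_ext (u v : Cx) : fst u = fst v -> snd u = snd v -> u = v.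
Proof. destruct u, v; simpl; intros -> ->; reflexivity. Qed.

Definition Cconj (u : Cx) : Cx := (fst u, - snd u).
Definition sq_norm (u : Cx) : R := fst u * fst u + snd u * snd u.

Lemma sq_norm_nonneg u : 0 <= sq_norm u.
Proof. unfold sq_norm. nra. Qed.
Definition conj_sign (c : bool) : R := if c then 1 else -1.

Lemma part_conj c u : part c (Cconj u) = conj_sign c * part c u.
Proof. destruct c; simpl; ring. Qed.

Lemma CInt_part (f : R -> Cx) a b v : CInt f a b v ->
  forall c, is_RInt (fun x => part c (f x)) a b (part c v).
Proof. intros [H1 H2] [|]; apply RInt_spec; assumption. Qed.

Lemma CInt_of_parts (f : R -> Cx) a b v :
  (forall c, is_RInt (fun x => part c (f x)) a b (part c v)) -> CInt f a b v.
Proof. intros H. split; apply RInt_spec; [apply (H true) | apply (H false)]. Qed.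

Lemma Csum_part_zero n F c : (forall j, (j < n)%nat -> F j = RtoC 0) -> part c (Csum n F) = 0.
Proof.
  induction n as [|n IH]; intros H; simpl; [now destruct c|].
  rewrite part_add, (H n) by lia. rewrite IH by (intros; apply H; lia).
  destruct c; simpl; ring.
Qed.

Lemma Csum_fst_nonneg n F : (forall j, (j < n)%nat -> 0 <= fst (F j)) -> 0 <= fst (Csum n F).
Proof.
  induction n as [|n IH]; intros H; simpl; [lra|].
  assert (0 <= fst (Csum n F)) by (apply IH; intros; apply H; lia).
  pose proof (H n ltac:(lia)). lra.
Qed.

Lemma H1loc_ftc f fp : H1loc f fp -> forall c a b, 0 <= a <= b ->
  is_RInt (fun x => part c (fp x)) a b (part c (f b) - part c (f a)).
Proof.
  intros H c a b Hab.
  pose proof (CInt_part _ _ _ _ (H a ltac:(lra)) c) as Ha.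
  pose proof (CInt_part _ _ _ _ (H b ltac:(lra)) c) as Hb.
  destruct (rint_split _ 0 a b _ ltac:(lra) Hb) as (v1 & v2 & H1 & H2 & E).
  rewrite part_sub in Ha, E. rewrite (rint_unique _ _ _ _ _ H1 Ha) in E.
  apply (rint_eq_val _ _ _ v2); [lra | exact H2].
Qed.

Lemma H1loc_continuous f fp : H1loc f fp -> forall c x, 0 < x ->
  continuity_pt (fun t => part c (f t)) x.
Proof.
  intros H c x Hx.
  assert (Hc : continuous (fun z => part c (f z) - part c (f 0)) x).
  { apply (continuous_RInt_1 (fun t => part c (fp t)) 0 x).
    apply (locally_interval _ x 0 p_infty); simpl; auto.
    intros z Hz _. apply H1loc_ftc; [exact H | lra]. }
  apply continuity_pt_filterlim in Hc.
  apply (continuity_pt_ext (fun z => (part c (f z) - part c (f 0)) + part c (f 0))).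
  - intros; ring.
  - apply continuity_pt_plus; [exact Hc | apply continuity_pt_const; intros ? ?; reflexivity].
Qed.

Lemma H1loc_real (F g : R -> R) : (forall X, 0 <= X -> is_RInt g 0 X (F X - F 0)) ->
  H1loc (fun t => RtoC (F t)) (fun t => RtoC (g t)).
Proof.
  intros H X HX. apply CInt_of_parts. intros [|]; simpl.
  - now apply H.
  - apply (rint_eq_val _ _ _ (0 * (X - 0))); [ring | apply rint_const].
Qed.

(** Three piecewise linear test functions are fed into the weak equation:
    tents supported in the tail interval, a ramp at the left end point, and
    the conjugate of the solution cut off linearly at [R]. *)

Ltac split_branches := repeat match goal with
  | |- context [Rle_dec ?a ?b] => destruct (Rle_dec a b)
  | |- context [Rlt_dec ?a ?b] => destruct (Rlt_dec a b) end; try lra.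

Definition tent x0 dl t :=
  if Rle_dec t (x0 - dl) then 0 else if Rle_dec t x0 then (t - (x0 - dl)) / dl
  else if Rle_dec t (x0 + dl) then (x0 + dl - t) / dl else 0.
Definition tent' x0 dl t :=
  if Rlt_dec t (x0 - dl) then 0 else if Rlt_dec t x0 then 1 / dl
  else if Rlt_dec t (x0 + dl) then - 1 / dl else 0.

Lemma tent_H1 x0 dl : 0 < dl -> 0 < x0 - dl ->
  H1loc (fun t => RtoC (tent x0 dl t)) (fun t => RtoC (tent' x0 dl t)).
Proof.
  intros Hd Ha. apply H1loc_real. intros X HX.
  assert (H0 : tent x0 dl 0 = 0) by (unfold tent; split_branches).
  rewrite H0.
  assert (I1 : forall Y, 0 <= Y <= x0 - dl -> is_RInt (tent' x0 dl) 0 Y (0 * (Y - 0)))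
    by (intros Y HY; apply rint_const_on; [lra|]; intros x Hx; unfold tent'; split_branches).
  assert (I2 : forall Y, x0 - dl <= Y <= x0 ->
            is_RInt (tent' x0 dl) (x0 - dl) Y (1 / dl * (Y - (x0 - dl))))
    by (intros Y HY; apply rint_const_on; [lra|]; intros x Hx; unfold tent'; split_branches).
  assert (I3 : forall Y, x0 <= Y <= x0 + dl -> is_RInt (tent' x0 dl) x0 Y (-1 / dl * (Y - x0)))
    by (intros Y HY; apply rint_const_on; [lra|]; intros x Hx; unfold tent'; split_branches).
  assert (I4 : forall Y, x0 + dl <= Y -> is_RInt (tent' x0 dl) (x0 + dl) Y (0 * (Y - (x0 + dl))))
    by (intros Y HY; apply rint_const_on; [lra|]; intros x Hx; unfold tent'; split_branches).
  destruct (Rle_dec X (x0 - dl)); [|destruct (Rle_dec X x0); [|destruct (Rle_dec X (x0 + dl))]].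
  - eapply rint_eq_val; [|apply I1; lra]. unfold tent; split_branches.
  - eapply rint_eq_val; [|apply (rint_chasles _ _ (x0 - dl)); [apply I1 | apply I2]; lra].
    unfold tent; split_branches; field; lra.
  - eapply rint_eq_val.
    2:{ apply (rint_chasles _ _ x0); [apply (rint_chasles _ _ (x0 - dl))|];
        [apply I1 | apply I2 | apply I3]; lra. }
    unfold tent; split_branches; field; lra.
  - eapply rint_eq_val.
    2:{ apply (rint_chasles _ _ (x0 + dl)); [apply (rint_chasles _ _ x0)|];
        [apply (rint_chasles _ _ (x0 - dl))| |]; [apply I1 | apply I2 | apply I3 | apply I4]; lra. }
    unfold tent; split_branches; field; lra.
Qed.

Lemma tent_nonneg x0 dl t : 0 < dl -> 0 <= tent x0 dl t.
Proof.
  intros Hd. unfold tent. split_branches; unfold Rdiv; apply Rmult_le_pos; try lra;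
  left; apply Rinv_0_lt_compat; lra.
Qed.

Lemma tent_outside x0 dl t : t <= x0 - dl \/ x0 + dl <= t -> tent x0 dl t = 0.
Proof. intros Ht. unfold tent. split_branches. replace t with (x0 + dl) by lra. field; lra. Qed.

Lemma rint_affine al be a b :
  is_RInt (fun t => al * t + be) a b (al * (b * b - a * a) / 2 + be * (b - a)).
Proof.
  apply (rint_eq_val _ _ _ ((al * b * b / 2 + be * b) - (al * a * a / 2 + be * a))); [field|].
  apply (is_RInt_derive (fun t => al * t * t / 2 + be * t) (fun t => al * t + be)).
  - intros x _. auto_derive; [exact I | field].
  - intros x _. apply (ex_derive_continuous (K:=R_AbsRing) (V:=R_NormedModule)). auto_derive. exact I.
Qed.

Lemma tent_area x0 dl : 0 < dl -> is_RInt (tent x0 dl) (x0 - dl) (x0 + dl) dl.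
Proof.
  intros Hd.
  eapply rint_eq_val.
  2:{ apply (rint_chasles _ _ x0).
      - apply (rint_ext (fun t => 1 / dl * t + (- (x0 - dl) / dl))); [lra| |apply rint_affine].
        intros x Hx. unfold tent. split_branches; field; lra.
      - apply (rint_ext (fun t => -1 / dl * t + ((x0 + dl) / dl))); [lra| |apply rint_affine].
        intros x Hx. unfold tent. split_branches; field; lra. }
  field. lra.
Qed.

Lemma tent_flux f fp x0 dl A c : H1loc f fp -> 0 < dl -> 0 < x0 - dl ->
  CInt (fun x => Cmul (fp x) (RtoC (tent' x0 dl x))) 0 (x0 + dl) A ->
  part c A = - (part c (f (x0 + dl)) - 2 * part c (f x0) + part c (f (x0 - dl))) / dl.
Proof.
  intros H1 Hd Hx HA. pose proof (CInt_part _ _ _ _ HA c) as HAc.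
  apply (rint_drop_zero_part _ 0 (x0 - dl)) in HAc;
    [|lra|intros x Hx'; rewrite part_mul_real_r; unfold tent'; split_branches; ring].
  destruct (rint_split _ (x0 - dl) x0 (x0 + dl) _ ltac:(lra) HAc) as (a1 & a2 & H1a & H2a & ->).
  assert (E1 : a1 = 1 / dl * (part c (f x0) - part c (f (x0 - dl)))).
  { eapply (rint_ext_val _ (fun t => 1 / dl * part c (fp t)) (x0 - dl) x0); [lra| |exact H1a|].
    - intros x Hx'. cbv beta. rewrite part_mul_real_r. unfold tent'. split_branches; ring.
    - apply rint_scal, H1loc_ftc; [exact H1 | lra]. }
  assert (E2 : a2 = -1 / dl * (part c (f (x0 + dl)) - part c (f x0))).
  { eapply (rint_ext_val _ (fun t => -1 / dl * part c (fp t)) x0 (x0 + dl)); [lra| |exact H2a|].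
    - intros x Hx'. cbv beta. rewrite part_mul_real_r. unfold tent'. split_branches; ring.
    - apply rint_scal, H1loc_ftc; [exact H1 | lra]. }
  rewrite E1, E2. field. lra.
Qed.

Definition ramp dl t := if Rle_dec t dl then (dl - t) / dl else 0.
Definition ramp' dl t := if Rlt_dec t dl then -1 / dl else 0.

Lemma ramp_H1 dl : 0 < dl -> H1loc (fun t => RtoC (ramp dl t)) (fun t => RtoC (ramp' dl t)).
Proof.
  intros Hd. apply H1loc_real. intros X HX.
  assert (R0 : ramp dl 0 = 1) by (unfold ramp; split_branches; field; lra).
  rewrite R0. destruct (Rle_dec X dl).
  - replace (ramp dl X - 1) with (-1 / dl * (X - 0)) by (unfold ramp; split_branches; field; lra).
    apply rint_const_on; [lra|]. intros x Hx. unfold ramp'. split_branches.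
  - replace (ramp dl X - 1) with (-1 / dl * (dl - 0) + 0 * (X - dl))
      by (unfold ramp; split_branches; field; lra).
    apply (rint_chasles _ _ dl); apply rint_const_on; try lra; intros x Hx; unfold ramp'; split_branches.
Qed.

Definition conj_cutoff (f : R -> Cx) s K t :=
  if Rle_dec t s then Cconj (f t)
  else if Rle_dec t K then Cmul (Cconj (f s)) (RtoC ((K - t) / (K - s))) else RtoC 0.
Definition conj_cutoff' (fp f : R -> Cx) s K t :=
  if Rlt_dec t s then Cconj (fp t)
  else if Rlt_dec t K then Cmul (Cconj (f s)) (RtoC (-1 / (K - s))) else RtoC 0.

Lemma conj_cutoff_H1 f fp s K : H1loc f fp -> 0 < s < K ->
  H1loc (conj_cutoff f s K) (conj_cutoff' fp f s K).
Proof.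
  intros H1 Hs X HX. apply CInt_of_parts. intros c.
  assert (I1 : forall Y, 0 <= Y <= s -> is_RInt (fun x => part c (conj_cutoff' fp f s K x)) 0 Y
             (conj_sign c * (part c (f Y) - part c (f 0)))).
  { intros Y HY. eapply rint_ext; [lra| |apply rint_scal; apply (H1loc_ftc f fp H1 c 0 Y); lra].
    intros x Hx. unfold conj_cutoff'. split_branches. now rewrite part_conj. }
  assert (I2 : forall Y, s <= Y <= K -> is_RInt (fun x => part c (conj_cutoff' fp f s K x)) s Y
             ((conj_sign c * part c (f s) * (-1 / (K - s))) * (Y - s))).
  { intros Y HY. apply rint_const_on; [lra|]. intros x Hx. unfold conj_cutoff'. split_branches.
    now rewrite part_mul_real_r, part_conj. }
  assert (I3 : forall Y, K <= Y -> is_RInt (fun x => part c (conj_cutoff' fp f s K x)) K Y (0 * (Y - K))).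
  { intros Y HY. apply rint_const_on; [lra|]. intros x Hx. unfold conj_cutoff'. split_branches.
    now destruct c. }
  assert (E0 : conj_cutoff f s K 0 = Cconj (f 0)) by (unfold conj_cutoff; split_branches; reflexivity).
  rewrite part_sub, E0, part_conj.
  destruct (Rle_dec X s); [|destruct (Rle_dec X K)].
  - eapply rint_eq_val; [|apply I1; lra]. unfold conj_cutoff. split_branches.
    rewrite part_conj. ring.
  - eapply rint_eq_val; [|apply (rint_chasles _ _ s); [apply I1 | apply I2]; lra].
    unfold conj_cutoff. split_branches. rewrite part_mul_real_r, part_conj. field. lra.
  - eapply rint_eq_val.
    2:{ apply (rint_chasles _ _ K); [apply (rint_chasles _ _ s)|]; [apply I1 | apply I2 | apply I3]; lra. }
    unfold conj_cutoff. split_branches. destruct c; simpl; field; lra.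
Qed.

(** Tents and the linear cutoff
    are affine on pieces, so this identity evaluates every integral of an
    exponential profile that the argument needs. *)
Lemma rint_second_derivative_affine (u u' u'' : R -> R) (al be a b : R) :
  (forall t, is_derive u t (u' t)) -> (forall t, is_derive u' t (u'' t)) ->
  (forall t, continuous u'' t) ->
  is_RInt (fun t => u'' t * (al * t + be)) a b
    ((u' b * (al * b + be) - al * u b) - (u' a * (al * a + be) - al * u a)).
Proof.
  intros Du Du' Cu''.
  apply (is_RInt_derive (fun t => u' t * (al * t + be) - al * u t)).
  - intros t _.
    assert (Dw : is_derive (fun t => al * t + be) t al) by (auto_derive; [exact I | ring]).
    pose proof (is_derive_minus _ _ t _ _ (is_derive_mult _ _ t _ _ (Du' t) Dw Rmult_comm)
                  (is_derive_scal u t al _ (Du t))) as D.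
    unfold minus, plus, opp, mult in D; simpl in D.
    replace (u'' t * (al * t + be)) with (u'' t * (al * t + be) + u' t * al + - (al * u' t)) by ring.
    exact D.
  - intros t _. apply (continuous_mult (K := R_AbsRing)); [apply Cu''|].
    apply (ex_derive_continuous (K := R_AbsRing) (V := R_NormedModule)). auto_derive. exact I.
Qed.

Section SecondDerivative.
Variables u u' u'' : R -> R.
Hypothesis u_derive : forall t, is_derive u t (u' t).
Hypothesis u'_derive : forall t, is_derive u' t (u'' t).
Hypothesis u''_continuous : forall t, continuous u'' t.

Lemma tent_second_difference (x0 dl : R) : 0 < dl ->
  is_RInt (fun t => u'' t * tent x0 dl t) (x0 - dl) (x0 + dl)
    ((u (x0 + dl) - 2 * u x0 + u (x0 - dl)) / dl).
Proof.
  intros Hd.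
  pose proof (rint_second_derivative_affine u u' u'' (1 / dl) (- (x0 - dl) / dl) (x0 - dl) x0
                u_derive u'_derive u''_continuous) as Hl.
  pose proof (rint_second_derivative_affine u u' u'' (-1 / dl) ((x0 + dl) / dl) x0 (x0 + dl)
                u_derive u'_derive u''_continuous) as Hr.
  eapply rint_eq_val.
  2:{ apply (rint_chasles _ _ x0).
      - eapply rint_ext; [lra| |exact Hl]. intros x Hx. unfold tent. split_branches; field; lra.
      - eapply rint_ext; [lra| |exact Hr]. intros x Hx. unfold tent. split_branches; field; lra. }
  field. lra.
Qed.

Lemma ramp_moment (s K : R) :
  is_RInt (fun t => u'' t * (K - t)) s K (u K - u s - u' s * (K - s)).
Proof.
  pose proof (rint_second_derivative_affine u u' u'' (-1) K s K
                u_derive u'_derive u''_continuous) as H.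
  eapply rint_eq_val; [|eapply is_RInt_ext; [|exact H]].
  - ring.
  - intros x _. change (u'' x * (-1 * x + K) = u'' x * (K - x)). ring.
Qed.

End SecondDerivative.

Definition expo (k s P Q t : R) : R := P * exp (k * (t - s)) + Q * exp (- k * (t - s)).

Lemma expo_derive (k s P Q t : R) : is_derive (expo k s P Q) t (expo k s (k * P) (- (k * Q)) t).
Proof. unfold expo, Rminus. auto_derive; [exact I | ring]. Qed.

Lemma expo_second_derive (k s P Q t : R) :
  is_derive (expo k s (k * P) (- (k * Q))) t (k * k * expo k s P Q t).
Proof. unfold expo, Rminus. auto_derive; [exact I | ring]. Qed.

Lemma expo_continuous (k s P Q t : R) : continuous (expo k s P Q) t.
Proof.
  apply (ex_derive_continuous (K := R_AbsRing) (V := R_NormedModule)).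
  exists (expo k s (k * P) (- (k * Q)) t). apply expo_derive.
Qed.

Lemma expo_at_base k s P Q : expo k s P Q s = P + Q.
Proof. unfold expo. replace (s - s) with 0 by ring. rewrite !Rmult_0_r, exp_0. ring. Qed.

Lemma expo_at (k s P Q r : R) : expo k s P Q r = P * exp (k * (r - s)) + Q / exp (k * (r - s)).
Proof.
  unfold expo, Rdiv. rewrite <- exp_Ropp. replace (- k * (r - s)) with (- (k * (r - s))) by ring.
  reflexivity.
Qed.

Lemma expo_second_derivative_continuous (k s P Q t : R) :
  continuous (fun t => k * k * expo k s P Q t) t.
Proof. apply (continuous_mult (K := R_AbsRing)); [apply continuous_const | apply expo_continuous]. Qed.

Lemma expo_tent k s P Q x0 dl : k <> 0 -> 0 < dl ->
  is_RInt (fun t => expo k s P Q t * tent x0 dl t) (x0 - dl) (x0 + dl)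
    ((expo k s P Q (x0 + dl) - 2 * expo k s P Q x0 + expo k s P Q (x0 - dl)) / (k * k * dl)).
Proof.
  intros Hk Hd.
  pose proof (tent_second_difference _ _ _ (expo_derive k s P Q) (expo_second_derive k s P Q)
                (expo_second_derivative_continuous k s P Q) x0 dl Hd) as H.
  apply (rint_scal _ _ _ (/ (k * k))) in H.
  eapply rint_eq_val; [|eapply rint_ext; [lra| |exact H]].
  - field. split; [lra | exact Hk].
  - intros x _. cbv beta. field. exact Hk.
Qed.

Lemma weak_equation_parts y d h0 A B D Sg :
  Cadd (Cmul d h0) A = Cadd (Cmul (0, y) (Copp B)) (Cmul (Cmul (0, y) (0, y)) (Cadd D Sg)) ->
  forall c, part c (Cmul d h0) + part c A
            = part c (Cmul (0, y) (Copp B)) - y * y * (part c D + part c Sg).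
Proof.
  intros E c. apply (f_equal (part c)) in E.
  rewrite !part_add, part_mul_sq_imag, part_add in E. lra.
Qed.

Lemma max_of_points (p : nat -> R) (r : R) (N : nat) : 0 < r ->
  (forall j, (j < N)%nat -> p j < r) -> exists m, 0 <= m < r /\ forall j, (j < N)%nat -> p j <= m.
Proof.
  intros Hr. induction N as [|N IH]; intros H.
  - exists 0. split; [lra | intros j Hj; lia].
  - destruct IH as (m & Hm & Hj); [intros j Hj; apply H; lia|].
    exists (Rmax m (p N)). split.
    + split; [apply Rle_trans with m; [lra | apply Rmax_l]|].
      apply Rmax_lub_lt; [lra | apply H; lia].
    + intros j Hj'. destruct (Nat.eq_dec j N) as [->|Hne]; [apply Rmax_r|].
      apply Rle_trans with m; [apply Hj; lia | apply Rmax_l].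
Qed.

Lemma tail_structure S : exists s0 b, 0 <= s0 < Rb S /\ 0 < b /\
  (forall x, s0 < x < Rb S -> wf S x = 0 /\ rho S x = b) /\
  (forall j, (j < npts S)%nat -> pts S j < s0).
Proof.
  destruct (piecewise_const S) as (n & t & Ht0 & Htn & Hinc & Hpc).
  destruct (near_Rb S) as (d & Hd & Hnear).
  pose proof (Rb_pos S) as HR.
  destruct (max_of_points (pts S) (Rb S) (npts S) HR) as (m & Hm & Hmj);
    [intros j Hj; apply (pts_range S j Hj)|].
  destruct n as [|n]; [rewrite Ht0 in Htn; lra|].
  destruct (Hpc n ltac:(lia)) as (a & b & Hab).
  pose proof (Hinc n ltac:(lia)) as Hl. rewrite Htn in Hl.
  set (s0 := Rmax (Rmax (t n) (Rb S - d)) ((m + Rb S) / 2)).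
  assert (Hs1 : t n <= s0) by (unfold s0; eapply Rle_trans; [apply Rmax_l | apply Rmax_l]).
  assert (Hs2 : Rb S - d <= s0) by (unfold s0; eapply Rle_trans; [apply Rmax_r | apply Rmax_l]).
  assert (Hs3 : (m + Rb S) / 2 <= s0) by (unfold s0; apply Rmax_r).
  assert (Hs4 : s0 < Rb S) by (unfold s0; apply Rmax_lub_lt; [apply Rmax_lub_lt|]; lra).
  destruct (Hab ((s0 + Rb S) / 2) ltac:(lra)) as [_ Hb1].
  destruct (Hnear ((s0 + Rb S) / 2) ltac:(lra)) as [_ Hr1].
  exists s0, b. split; [|split; [lra|split]].
  - split; [|exact Hs4]. eapply Rle_trans; [|exact Hs3]. lra.
  - intros x Hx. split; [apply (Hnear x); lra | apply (Hab x); lra].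
  - intros j Hj. pose proof (Hmj j Hj). lra.
Qed.

Lemma head_structure S : exists t1 a0, 0 < t1 /\ forall x, 0 < x < t1 -> wf S x = a0.
Proof.
  destruct (piecewise_const S) as (n & t & Ht0 & Htn & Hinc & Hpc).
  pose proof (Rb_pos S) as HR.
  destruct n as [|n]; [rewrite Ht0 in Htn; lra|].
  destruct (Hpc 0%nat ltac:(lia)) as (a0 & b0 & H0).
  pose proof (Hinc 0%nat ltac:(lia)) as H01. rewrite Ht0 in H01.
  exists (t 1%nat), a0. split; [exact H01|].
  intros x Hx. apply (H0 x). rewrite Ht0. exact Hx.
Qed.

(** If a continuous [u] satisfies [u'' = K2 u] with [K2 > 0] weakly against
    tents, then [u] has no positive interior maximum: at such a point the
    tent average of [u] is positive while the second difference is not. *)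
Definition tent_identity (u : R -> R) a c K2 := forall x0 dl,
  0 < dl -> a < x0 - dl -> x0 + dl < c -> exists v : R,
    is_RInt (fun t => u t * tent x0 dl t) (x0 - dl) (x0 + dl) v /\
    u (x0 + dl) - 2 * u x0 + u (x0 - dl) = dl * K2 * v.

Lemma max_principle (u : R -> R) a c K2 : a < c -> 0 < K2 ->
  (forall x, a <= x <= c -> continuity_pt u x) -> u a <= 0 -> u c <= 0 ->
  tent_identity u a c K2 -> forall x, a <= x <= c -> u x <= 0.
Proof.
  intros Hac HK Hc Ha Hcc Hid x Hx.
  destruct (Rle_dec (u x) 0) as [|Hpos]; [assumption|exfalso].
  destruct (continuity_ab_maj u a c ltac:(lra) Hc) as (M & HM & HMr).
  pose proof (HM x Hx) as HMx.
  assert (HaM : a < M) by (destruct (Req_dec a M); [subst; lra | lra]).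
  assert (HMc : M < c) by (destruct (Req_dec M c); [subst; lra | lra]).
  destruct (Hc M HMr (u M / 2) ltac:(lra)) as (eta & Heta & Hnear).
  assert (Hn : forall t, Rabs (t - M) < eta -> u M / 2 < u t).
  { intros t Ht. destruct (Req_dec t M) as [->|Hne]; [lra|].
    pose proof (Hnear t (conj (conj I (not_eq_sym Hne)) Ht)) as H. simpl in H. unfold R_dist in H.
    apply Rabs_def2 in H. lra. }
  set (dl := Rmin (eta / 2) (Rmin ((M - a) / 2) ((c - M) / 2))).
  assert (Hdl1 : dl <= eta / 2) by apply Rmin_l.
  assert (Hdl2 : dl <= (M - a) / 2) by (eapply Rle_trans; [apply Rmin_r | apply Rmin_l]).
  assert (Hdl3 : dl <= (c - M) / 2) by (eapply Rle_trans; [apply Rmin_r | apply Rmin_r]).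
  assert (Hdl0 : 0 < dl) by (unfold dl; repeat apply Rmin_pos; lra).
  destruct (Hid M dl Hdl0 ltac:(lra) ltac:(lra)) as (v & Hv & E).
  assert (Hlow : u M / 2 * dl <= v).
  { apply (is_RInt_le (fun t => u M / 2 * tent M dl t) (fun t => u t * tent M dl t)
             (M - dl) (M + dl)); [lra | apply rint_scal, tent_area; lra | exact Hv|].
    intros t Ht. apply Rmult_le_compat_r; [apply tent_nonneg; lra|].
    left. apply Hn. apply Rabs_def1; lra. }
  assert (u (M + dl) <= u M) by (apply HM; lra).
  assert (u (M - dl) <= u M) by (apply HM; lra).
  assert (0 < dl * K2 * v) by (apply Rmult_lt_0_compat; [apply Rmult_lt_0_compat|]; nra).
  lra.
Qed.

(** Applied to [u] and [-u]: a solution vanishing at both ends vanishes. *)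
Lemma tent_identity_vanishes (u : R -> R) a c K2 : a < c -> 0 < K2 ->
  (forall x, a <= x <= c -> continuity_pt u x) -> u a = 0 -> u c = 0 ->
  tent_identity u a c K2 -> forall x, a <= x <= c -> u x = 0.
Proof.
  intros Hac HK Hc Ha Hcc Hid x Hx.
  assert (Hneg : tent_identity (fun t => - u t) a c K2).
  { intros x0 dl Hdl Hl Hr. destruct (Hid x0 dl Hdl Hl Hr) as (v & Hv & E).
    exists (-1 * v). split; [|lra].
    eapply rint_ext; [lra| |exact (rint_scal _ _ _ (-1) _ Hv)]. intros; cbv beta; ring. }
  pose proof (max_principle u a c K2 Hac HK Hc ltac:(lra) ltac:(lra) Hid x Hx).
  pose proof (max_principle (fun t => - u t) a c K2 Hac HK
                (fun x Hx => continuity_pt_opp _ _ (Hc x Hx)) ltac:(lra) ltac:(lra) Hneg x Hx).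
  cbv beta in *. lra.
Qed.

Lemma cutoff_flux f fp s K A : H1loc f fp -> 0 < s < K ->
  CInt (fun x => Cmul (fp x) (conj_cutoff' fp f s K x)) 0 K A ->
  exists A0 : R, is_RInt (fun t => sq_norm (fp t)) 0 s A0 /\
    fst A = A0 - (fst (f s) * (fst (f K) - fst (f s)) + snd (f s) * (snd (f K) - snd (f s))) / (K - s).
Proof.
  intros H1 Hs HA. pose proof (CInt_part _ _ _ _ HA true) as HAc.
  destruct (rint_split _ 0 s K _ ltac:(lra) HAc) as (A0 & A1 & HA0 & HA1 & EA).
  exists A0. split.
  - eapply rint_ext; [lra| |exact HA0]. intros x Hx. unfold conj_cutoff'. split_branches.
    unfold sq_norm. simpl. ring.
  - assert (EA1 : A1 = -1 / (K - s) * (fst (f s) * (fst (f K) - fst (f s))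
                                        + snd (f s) * (snd (f K) - snd (f s)))).
    { eapply (rint_ext_val _ _ s K); [lra| |exact HA1|].
      2:{ apply rint_scal.
          exact (rint_add _ _ _ _ _ _
                   (rint_scal _ _ _ (fst (f s)) _ (H1loc_ftc f fp H1 true s K ltac:(lra)))
                   (rint_scal _ _ _ (snd (f s)) _ (H1loc_ftc f fp H1 false s K ltac:(lra)))). }
      intros x Hx. unfold conj_cutoff'. split_branches. simpl. field. lra. }
    simpl in EA. rewrite EA, EA1. field. lra.
Qed.

Lemma expo_ramp_moment k s P Q K : k <> 0 ->
  is_RInt (fun t => expo k s P Q t * (K - t)) s K
    ((expo k s P Q K - (P + Q) - k * (P - Q) * (K - s)) / (k * k)).
Proof.
  intros Hk.
  pose proof (ramp_moment _ _ _ (expo_derive k s P Q) (expo_second_derive k s P Q)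
                (expo_second_derivative_continuous k s P Q) s K) as H.
  apply (rint_scal _ _ _ (/ (k * k))) in H.
  eapply rint_eq_val; [|eapply is_RInt_ext; [|exact H]].
  - rewrite !expo_at_base. field. exact Hk.
  - intros x _. change (/ (k * k) * (k * k * expo k s P Q x * (K - x)) = expo k s P Q x * (K - x)).
    field. exact Hk.
Qed.

(** If [int W = 0] and [u^2 <= W], then [u] integrates to zero against every
    square integrable [g]: by [|u g| <= (eps g^2 + W / eps) / 2] the integral
    is at most [eps/2 int g^2] for every [eps > 0]. *)
Lemma amgm_bound (u g W eps : R) : 0 < eps -> u * u <= W ->
  Rabs (u * g) <= (eps * (g * g) + / eps * W) / 2.
Proof.
  intros He HW.
  assert (E1 : eps * (g * g) + / eps * (u * u) - 2 * (u * g) = (eps * g - u) * (eps * g - u) / eps)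
    by (field; lra).
  assert (E2 : eps * (g * g) + / eps * (u * u) + 2 * (u * g) = (eps * g + u) * (eps * g + u) / eps)
    by (field; lra).
  assert (Hi : 0 < / eps) by (apply Rinv_0_lt_compat; lra).
  assert (0 <= (eps * g - u) * (eps * g - u) / eps) by (unfold Rdiv; apply Rmult_le_pos; [apply Rle_0_sqr | lra]).
  assert (0 <= (eps * g + u) * (eps * g + u) / eps) by (unfold Rdiv; apply Rmult_le_pos; [apply Rle_0_sqr | lra]).
  assert (/ eps * (u * u) <= / eps * W) by (apply Rmult_le_compat_l; lra).
  apply Rabs_le. split; lra.
Qed.

Lemma integral_mul_vanishes (u W g : R -> R) a b (G2 v : R) : a <= b ->
  (forall x, a < x < b -> u x * u x <= W x) -> is_RInt W a b 0 ->
  is_RInt (fun x => g x * g x) a b G2 -> is_RInt (fun x => u x * g x) a b v -> v = 0.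
Proof.
  intros Hab HW IW IG Iv.
  assert (HG2 : 0 <= G2) by (eapply (rint_nonneg _ a b); [lra| |exact IG]; intros; nra).
  assert (Hb : forall eps, 0 < eps -> Rabs v <= eps * G2 / 2).
  { intros eps He.
    assert (Iup : is_RInt (fun x => (eps * (g x * g x) + / eps * W x) / 2) a b (eps * G2 / 2)).
    { pose proof (rint_scal _ _ _ (/ 2) _
        (rint_add _ _ _ _ _ _ (rint_scal _ _ _ eps _ IG) (rint_scal _ _ _ (/ eps) _ IW))) as I.
      eapply rint_eq_val; [|eapply rint_ext; [exact Hab| |exact I]].
      - field. lra.
      - intros x _. cbv beta. field. lra. }
    apply Rabs_le. split.
    - apply (rint_scal _ _ _ (-1)) in Iup.
      enough (-1 * (eps * G2 / 2) <= v) by lra.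
      apply (is_RInt_le _ _ a b _ _ Hab Iup Iv). intros x Hx. cbv beta.
      pose proof (amgm_bound (u x) (g x) (W x) eps He (HW x Hx)) as P.
      pose proof (Rabs_maj2 (u x * g x)). lra.
    - apply (is_RInt_le _ _ a b _ _ Hab Iv Iup). intros x Hx.
      pose proof (amgm_bound (u x) (g x) (W x) eps He (HW x Hx)) as P.
      pose proof (Rle_abs (u x * g x)). lra. }
  apply Rabs_eq_0. apply Rle_antisym; [|apply Rabs_pos].
  apply le_epsilon. intros e He. rewrite Rplus_0_l.
  eapply Rle_trans; [apply (Hb (2 * e / (G2 + 1))); apply Rdiv_lt_0_compat; lra|].
  apply (Rmult_le_reg_r (G2 + 1)); [lra|]. field_simplify; [nra | lra].
Qed.

Lemma constant_of_zero_energy f fp s : H1loc f fp ->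
  is_RInt (fun t => sq_norm (fp t)) 0 s 0 -> forall c x, 0 <= x <= s -> part c (f x) = part c (f 0).
Proof.
  intros H1 IW c x Hx.
  assert (IWx : is_RInt (fun t => sq_norm (fp t)) 0 x 0)
    by (apply (rint_sub_interval _ 0 s); [lra | lra | intros; apply sq_norm_nonneg | exact IW]).
  enough (part c (f x) - part c (f 0) = 0) by lra.
  eapply (integral_mul_vanishes (fun t => part c (fp t)) _ (fun _ => 1) 0 x (1 * (x - 0)));
    [lra| |exact IWx|apply rint_const_on; [lra | intros; ring]|].
  - intros t Ht. unfold sq_norm. destruct c; simpl; nra.
  - eapply rint_ext; [lra| |apply (H1loc_ftc f fp H1 c 0 x); lra]. intros; simpl; ring.
Qed.

(** This
    identifies the quasi-derivative at [R] on a potential-free tail. *)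
Lemma derivative_of_left_integral (F G : R -> R) r a L : a < r ->
  (forall t, a < t < r -> is_RInt G t r (F r - F t)) ->
  (forall e, 0 < e -> exists del, 0 < del /\ forall t, r - del < t < r -> Rabs (G t - G r) < e) ->
  derivable_pt_lim F r L -> G r = L.
Proof.
  intros Ha HI Hlc HD.
  destruct (Req_dec (G r) L) as [E|Hne]; [exact E|exfalso].
  set (e := Rabs (G r - L) / 3).
  assert (He : 0 < e) by (unfold e; pose proof (Rabs_pos_lt (G r - L) ltac:(lra)); lra).
  destruct (Hlc e He) as (del1 & Hd1 & Hc1).
  destruct (HD e He) as (del2 & Hc2). pose proof (cond_pos del2) as Hd2.
  set (m := Rmin (Rmin del1 del2) (r - a) / 2).
  assert (Hm : 0 < m /\ m < del1 /\ m < del2 /\ m < r - a).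
  { unfold m. pose proof (Rmin_l (Rmin del1 del2) (r - a)). pose proof (Rmin_r (Rmin del1 del2) (r - a)).
    pose proof (Rmin_l del1 del2). pose proof (Rmin_r del1 del2).
    assert (0 < Rmin (Rmin del1 del2) (r - a)) by (repeat apply Rmin_pos; lra). lra. }
  destruct Hm as (Hm0 & Hm1 & Hm2 & Hm3).
  pose proof (HI (r - m) ltac:(lra)) as Hint. replace (r - (r - m)) with m in * by ring.
  assert (Hup : F r - F (r - m) <= (G r + e) * m).
  { replace m with (r - (r - m)) at 2 by ring.
    apply (is_RInt_le _ _ (r - m) r _ _ ltac:(lra) Hint (rint_const _ _ _)).
    intros x Hx. pose proof (Hc1 x ltac:(lra)). pose proof (Rle_abs (G x - G r)). lra. }
  assert (Hlo : (G r - e) * m <= F r - F (r - m)).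
  { replace m with (r - (r - m)) at 1 by ring.
    apply (is_RInt_le _ _ (r - m) r _ _ ltac:(lra) (rint_const _ _ _) Hint).
    intros x Hx. pose proof (Hc1 x ltac:(lra)). pose proof (Rabs_maj2 (G x - G r)). lra. }
  pose proof (Hc2 (- m) ltac:(lra) ltac:(rewrite Rabs_Ropp, Rabs_pos_eq; lra)) as Hq.
  replace ((F (r + - m) - F r) / - m) with ((F r - F (r - m)) / m) in Hq by (unfold Rminus; field; lra).
  assert (Havg : Rabs ((F r - F (r - m)) / m - G r) <= e).
  { apply Rabs_le. split; apply (Rmult_le_reg_r m); try lra; unfold Rdiv; field_simplify; lra. }
  assert (Rabs (G r - L) <= 2 * e).
  { replace (G r - L) with (((F r - F (r - m)) / m - L) - ((F r - F (r - m)) / m - G r)) by ring.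
    eapply Rle_trans; [apply Rabs_triang|]. rewrite Rabs_Ropp. lra. }
  unfold e in H. pose proof (Rabs_pos_lt (G r - L) ltac:(lra)). lra.
Qed.

(** At [R] the solution is [P X + Q / X] and its quasi-derivative is
    [k (P X - Q / X)] with [X = e^(k (R - s))], [k = y b] and complex
    [P], [Q] with [|Q| <= |P|].  Their ratio divided by [iy] differs from
    [-ib] by [2ib Q / (P X^2 + Q)], which is [O(X^-2)]. *)
Lemma Cnorm_le_of_sq_norm u r : 0 <= r -> sq_norm u <= r * r -> Cnorm u <= r.
Proof.
  intros Hr Hu. unfold Cnorm. rewrite <- (sqrt_Rsqr r Hr). apply sqrt_le_1_alt. exact Hu.
Qed.

Lemma sq_norm_mul_Cinv u v : sq_norm v <> 0 -> sq_norm (Cmul u (Cinv v)) = sq_norm u / sq_norm v.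
Proof. intros Hv. unfold sq_norm in *. unfold Cmul, Cinv. simpl. field. exact Hv. Qed.

(** Cauchy-Schwarz: the cross term cannot cancel more than [2 |P|^2]. *)
Lemma profile_lower_bound X P1 P2 Q1 Q2 : 0 < X -> 4 <= X * X ->
  Q1 * Q1 + Q2 * Q2 <= P1 * P1 + P2 * P2 ->
  (P1 * P1 + P2 * P2) * (X * X) / 2 <= sq_norm (P1 * X + Q1 / X, P2 * X + Q2 / X).
Proof.
  intros HX HX4 HQ.
  set (p2 := P1 * P1 + P2 * P2) in *. set (q2 := Q1 * Q1 + Q2 * Q2) in *.
  set (pq := P1 * Q1 + P2 * Q2).
  assert (Hp2 : 0 <= p2) by (unfold p2; nra).
  assert (CS : pq * pq <= p2 * q2).
  { assert (E : p2 * q2 - pq * pq = (P1 * Q2 - P2 * Q1) * (P1 * Q2 - P2 * Q1)) by (unfold p2, q2, pq; ring).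
    pose proof (Rle_0_sqr (P1 * Q2 - P2 * Q1)). unfold Rsqr in *. lra. }
  assert (Hpq : - p2 <= pq).
  { assert (p2 * q2 <= p2 * p2) by (apply Rmult_le_compat_l; lra).
    destruct (Rle_dec (- p2) pq) as [|Hn]; [assumption|]. nra. }
  assert (E : sq_norm (P1 * X + Q1 / X, P2 * X + Q2 / X) = p2 * (X * X) + 2 * pq + q2 / (X * X)).
  { unfold sq_norm, p2, pq, q2. simpl. field. lra. }
  rewrite E. assert (0 <= q2 / (X * X)) by (unfold q2; apply Rdiv_le_0_compat; nra).
  nra.
Qed.

Lemma ratio_identity y b X P1 P2 Q1 Q2 : 0 < y -> 0 < X ->
  sq_norm (P1 * X + Q1 / X, P2 * X + Q2 / X) <> 0 ->
  Csub (Cdiv (y * b * (P1 * X - Q1 / X), y * b * (P2 * X - Q2 / X))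
             (Cmul (0, y) (P1 * X + Q1 / X, P2 * X + Q2 / X))) (0, - b)
  = Cmul (-2 * (y * b) * Q1 / X, -2 * (y * b) * Q2 / X)
         (Cinv (Cmul (0, y) (P1 * X + Q1 / X, P2 * X + Q2 / X))).
Proof.
  intros Hy HX HF. unfold sq_norm in HF. simpl in HF.
  assert (HG : 0 < (P1 * X * X + Q1) * (P1 * X * X + Q1) + (P2 * X * X + Q2) * (P2 * X * X + Q2)).
  { replace ((P1 * X * X + Q1) * (P1 * X * X + Q1) + (P2 * X * X + Q2) * (P2 * X * X + Q2))
      with (X * X * ((P1 * X + Q1 / X) * (P1 * X + Q1 / X) + (P2 * X + Q2 / X) * (P2 * X + Q2 / X)))
      by (field; lra).
    apply Rmult_lt_0_compat; [nra|]. destruct (Rle_lt_or_eq_dec 0 _ (sq_norm_nonneg (P1 * X + Q1 / X, P2 * X + Q2 / X)));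
      [assumption | unfold sq_norm in *; simpl in *; lra]. }
  set (G := (P1 * X * X + Q1) * (P1 * X * X + Q1) + (P2 * X * X + Q2) * (P2 * X * X + Q2)) in HG.
  assert (HyG : 0 < y * y * G) by (apply Rmult_lt_0_compat; nra).
  apply Cx_ext; unfold Csub, Cdiv, Cadd, Copp, Cmul, Cinv; simpl; field;
    (split; [lra | match goal with |- ?e <> 0 => replace e with (y * y * G) by (unfold G; ring) end; lra]).
Qed.

Lemma ratio_estimate y b X P1 P2 Q1 Q2 : 0 < y -> 0 < b -> 0 < X -> 4 <= X * X ->
  0 < P1 * P1 + P2 * P2 -> Q1 * Q1 + Q2 * Q2 <= P1 * P1 + P2 * P2 ->
  Cnorm (Csub (Cdiv (y * b * (P1 * X - Q1 / X), y * b * (P2 * X - Q2 / X))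
                    (Cmul (0, y) (P1 * X + Q1 / X, P2 * X + Q2 / X))) (0, - b))
    <= 4 * b / (X * X).
Proof.
  intros Hy Hb HX HX4 HP HQ.
  pose proof (profile_lower_bound X P1 P2 Q1 Q2 HX HX4 HQ) as Hlow.
  rewrite ratio_identity by (try lra; nra).
  set (F := (P1 * X + Q1 / X, P2 * X + Q2 / X)) in *.
  assert (HF : 0 < sq_norm F) by nra.
  assert (EDn : sq_norm (Cmul (0, y) F) = y * y * sq_norm F) by (unfold sq_norm; simpl; ring).
  apply Cnorm_le_of_sq_norm; [apply Rdiv_le_0_compat; nra|].
  rewrite sq_norm_mul_Cinv, EDn by (rewrite EDn; apply Rgt_not_eq, Rmult_lt_0_compat; nra).
  assert (ENc : sq_norm (-2 * (y * b) * Q1 / X, -2 * (y * b) * Q2 / X)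
                = 4 * (y * b) * (y * b) * (Q1 * Q1 + Q2 * Q2) / (X * X)) by (unfold sq_norm; simpl; field; lra).
  assert (HD : 0 < y * y * sq_norm F) by (apply Rmult_lt_0_compat; nra).
  rewrite ENc. apply (Rmult_le_reg_r (y * y * sq_norm F)); [exact HD|].
  unfold Rdiv at 1. rewrite Rmult_assoc, Rinv_l, Rmult_1_r by lra.
  apply Rle_trans with (4 * (y * b) * (y * b) * (P1 * P1 + P2 * P2) / (X * X)).
  - apply Rmult_le_compat_r; [apply Rlt_le, Rinv_0_lt_compat; nra|]. nra.
  - replace (4 * b / (X * X) * (4 * b / (X * X)) * (y * y * sq_norm F))
      with (16 * (y * b) * (y * b) / (X * X) / (X * X) * sq_norm F) by (field; lra).
    apply Rle_trans with (16 * (y * b) * (y * b) / (X * X) / (X * X) * ((P1 * P1 + P2 * P2) * (X * X) / 2)).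
    + assert (0 <= 4 * (y * b) * (y * b) * (P1 * P1 + P2 * P2) / (X * X))
        by (apply Rdiv_le_0_compat; nra).
      replace (16 * (y * b) * (y * b) / (X * X) / (X * X) * ((P1 * P1 + P2 * P2) * (X * X) / 2))
        with (2 * (4 * (y * b) * (y * b) * (P1 * P1 + P2 * P2) / (X * X))) by (field; lra).
      lra.
    + apply Rmult_le_compat_l; [|exact Hlow]. repeat apply Rdiv_le_0_compat; nra.
Qed.

Section TailSolution.
Variables (S : classF) (y : R) (f fp : R -> Cx) (d : Cx) (s0 b : R).
Hypothesis y_pos : 0 < y.
Hypothesis sol : is_solution S (0, y) f fp d.
Hypothesis s0_nonneg : 0 <= s0.
Hypothesis b_pos : 0 < b.
Hypothesis tail_free : forall x, s0 < x < Rb S -> wf S x = 0.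
Hypothesis tail_density : forall x, s0 < x < Rb S -> rho S x = b.
Hypothesis atoms_below : forall j, (j < npts S)%nat -> pts S j < s0.

Lemma tail_tent_identity x0 dl c : 0 < dl -> s0 < x0 - dl -> x0 + dl < Rb S ->
  exists v : R, is_RInt (fun t => part c (f t) * tent x0 dl t) (x0 - dl) (x0 + dl) v /\
    part c (f (x0 + dl)) - 2 * part c (f x0) + part c (f (x0 - dl))
      = dl * ((y * b) * (y * b)) * v.
Proof.
  intros Hdl Hl Hr. destruct sol as [H1f Heq].
  destruct (Heq (fun t => RtoC (tent x0 dl t)) (fun t => RtoC (tent' x0 dl t)) (x0 + dl)
              ltac:(lra) (tent_H1 x0 dl Hdl ltac:(lra))) as (A & B & D & HA & HB & HD & E).
  { intros x Hx. rewrite tent_outside by lra. reflexivity. }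
  pose proof (weak_equation_parts _ _ _ _ _ _ _ E c) as Ec. clear E.
  assert (HB0 : forall c', part c' B = 0).
  { intros c'. pose proof (CInt_part _ _ _ _ HB c') as HBc.
    apply (rint_const_on_val _ 0 (x0 + dl) 0) in HBc; [lra | lra |].
    intros x Hx. cbv beta. destruct (Rlt_dec x (x0 - dl)).
    - rewrite tent_outside by lra. unfold tent'. split_branches. destruct c'; simpl; ring.
    - rewrite tail_free by lra. destruct c'; simpl; ring. }
  assert (EB : part c (Cmul (0, y) (Copp B)) = 0).
  { pose proof (HB0 true). pose proof (HB0 false). destruct c; simpl in *; nra. }
  rewrite EB, Csum_part_zero in Ec.
  2:{ intros j Hj. pose proof (atoms_below j Hj). rewrite tent_outside by lra.
      apply Cx_ext; simpl; ring. }
  rewrite tent_outside, (tent_flux f fp x0 dl A c H1f Hdl ltac:(lra) HA) in Ec by lra.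
  pose proof (CInt_part _ _ _ _ HD c) as HDc.
  apply (rint_drop_zero_part _ 0 (x0 - dl)) in HDc; [|lra|].
  2:{ intros x Hx. rewrite tent_outside by lra. destruct c; simpl; ring. }
  exists (part c D / (b * b)). split.
  - apply (rint_ext (fun t => / (b * b) * part c (Cmul (RtoC (rho S t * rho S t))
                                                  (Cmul (f t) (RtoC (tent x0 dl t)))))); [lra| |].
    + intros x Hx. rewrite tail_density, part_mul_real_l, part_mul_real_r by lra. field. lra.
    + replace (part c D / (b * b)) with (/ (b * b) * part c D) by (field; lra).
      now apply rint_scal.
  - replace (part c (Cmul d (RtoC 0))) with 0 in Ec by (destruct c; simpl; ring).
    apply (Rmult_eq_reg_l (/ dl)); [|apply Rinv_neq_0_compat; lra].
    field_simplify; [|lra|lra]. field_simplify in Ec; [|lra]. nra.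
Qed.

(** Hence on [[s, R]] each component of [f] is an exponential profile: the
    difference with the profile having the same boundary values satisfies
    the tent identity and vanishes at both ends. *)
Lemma tail_exponential s c : s0 < s < Rb S ->
  exists P Q, forall t, s <= t <= Rb S -> part c (f t) = expo (y * b) s P Q t.
Proof.
  intros Hs. destruct sol as [H1f _].
  set (k := y * b). assert (Hk : 0 < k) by (unfold k; nra).
  set (e1 := exp (k * (Rb S - s))). set (e2 := exp (- k * (Rb S - s))).
  assert (He : e2 < e1) by (unfold e1, e2; apply exp_increasing; nra).
  set (P := (part c (f (Rb S)) - part c (f s) * e2) / (e1 - e2)).
  set (Q := part c (f s) - P).
  exists P, Q.
  set (u := fun t => part c (f t) - expo k s P Q t).
  assert (Hid : tent_identity u s (Rb S) (k * k)).
  { intros x0 dl Hdl Hl Hr.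
    destruct (tail_tent_identity x0 dl c Hdl ltac:(lra) Hr) as (v & Hv & E).
    pose proof (expo_tent k s P Q x0 dl ltac:(lra) Hdl) as HE.
    eexists. split; [eapply rint_ext; [lra| |exact (rint_sub _ _ _ _ _ _ Hv HE)]|].
    - intros x _. unfold u. ring.
    - unfold u. fold k in E.
      replace (part c (f (x0 + dl)) - expo k s P Q (x0 + dl) - 2 * (part c (f x0) - expo k s P Q x0)
               + (part c (f (x0 - dl)) - expo k s P Q (x0 - dl)))
        with ((part c (f (x0 + dl)) - 2 * part c (f x0) + part c (f (x0 - dl)))
              - (expo k s P Q (x0 + dl) - 2 * expo k s P Q x0 + expo k s P Q (x0 - dl))) by ring.
      rewrite E. field. lra. }
  intros t Ht.
  enough (u t = 0) by (unfold u in *; lra).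
  apply (tent_identity_vanishes u s (Rb S) (k * k)); [lra | nra | | | | exact Hid | exact Ht].
  - intros x Hx. apply continuity_pt_minus; [apply (H1loc_continuous f fp H1f c x); lra|].
    apply continuity_pt_filterlim, expo_continuous.
  - unfold u. rewrite expo_at_base. unfold Q. ring.
  - unfold u, expo. fold e1 e2. unfold Q, P. field. lra.
Qed.

(** The three remaining terms of the weak equation tested against the
    conjugate cutoff on [[0, R]]: the potential term is real (on [[0, s]] its
    integrand is [2 w Re (f' conj f)], beyond [s] there is no potential), the
    density term is a nonnegative part plus an explicit tail part, and the
    point masses contribute nonnegatively. *)
Lemma cutoff_potential_imag s B : s0 < s < Rb S ->
  CInt (fun x => Cmul (RtoC (wf S x)) (Cadd (Cmul (fp x) (conj_cutoff f s (Rb S) x))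
                                            (Cmul (f x) (conj_cutoff' fp f s (Rb S) x))))
       0 (Rb S) B ->
  snd B = 0.
Proof.
  intros Hs HB. pose proof (CInt_part _ _ _ _ HB false) as HBc.
  destruct (rint_split _ 0 s (Rb S) _ ltac:(lra) HBc) as (b1 & b2 & Hb1 & Hb2 & Eb).
  apply (rint_const_on_val _ 0 s 0) in Hb1; [|lra|].
  2:{ intros x Hx. unfold conj_cutoff, conj_cutoff'. split_branches. simpl. ring. }
  apply (rint_const_on_val _ s (Rb S) 0) in Hb2; [|lra|].
  2:{ intros x Hx. cbv beta. rewrite tail_free by lra. simpl. ring. }
  simpl in Eb. lra.
Qed.

Lemma cutoff_mass s P1 Q1 P2 Q2 D : s0 < s < Rb S ->
  (forall t, s <= t <= Rb S -> fst (f t) = expo (y * b) s P1 Q1 t) ->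
  (forall t, s <= t <= Rb S -> snd (f t) = expo (y * b) s P2 Q2 t) ->
  CInt (fun x => Cmul (RtoC (rho S x * rho S x)) (Cmul (f x) (conj_cutoff f s (Rb S) x)))
       0 (Rb S) D ->
  exists D0 : R, 0 <= D0 /\ fst D = D0 + b * b / (Rb S - s) *
    ((P1 + Q1) * ((expo (y * b) s P1 Q1 (Rb S) - (P1 + Q1) - y * b * (P1 - Q1) * (Rb S - s)) / (y * b * (y * b)))
   + (P2 + Q2) * ((expo (y * b) s P2 Q2 (Rb S) - (P2 + Q2) - y * b * (P2 - Q2) * (Rb S - s)) / (y * b * (y * b)))).
Proof.
  intros Hs Hf1 Hf2 HD. set (K := Rb S) in *. set (k := y * b) in *.
  assert (Hk : 0 < k) by (unfold k; nra).
  pose proof (CInt_part _ _ _ _ HD true) as HDc.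
  destruct (rint_split _ 0 s K _ ltac:(lra) HDc) as (D0 & D1 & HD0 & HD1 & ED).
  exists D0. split.
  - eapply (rint_nonneg _ 0 s); [lra| |exact HD0]. intros x Hx. unfold conj_cutoff. split_branches.
    simpl. pose proof (sq_norm_nonneg (f x)). unfold sq_norm in *.
    replace (rho S x * rho S x * (fst (f x) * fst (f x) - snd (f x) * - snd (f x))
             - 0 * (fst (f x) * - snd (f x) + snd (f x) * fst (f x)))
      with ((rho S x * rho S x) * (fst (f x) * fst (f x) + snd (f x) * snd (f x))) by ring.
    apply Rmult_le_pos; nra.
  - simpl in ED. rewrite ED. apply Rplus_eq_compat_l.
    pose proof (rint_scal _ _ _ (b * b / (K - s)) _
                  (rint_add _ _ _ _ _ _
                     (rint_scal _ _ _ (P1 + Q1) _ (expo_ramp_moment k s P1 Q1 K ltac:(lra)))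
                     (rint_scal _ _ _ (P2 + Q2) _ (expo_ramp_moment k s P2 Q2 K ltac:(lra))))) as I.
    eapply (rint_ext_val _ _ s K); [lra| |exact HD1|exact I].
    intros x Hx. unfold conj_cutoff. split_branches. rewrite tail_density by lra.
    simpl. rewrite (Hf1 x), (Hf2 x), (Hf1 s), (Hf2 s) by lra. rewrite !expo_at_base.
    field. lra.
Qed.

Lemma atoms_conj_nonneg s : s0 < s ->
  0 <= fst (Csum (npts S) (fun j => Cmul (RtoC (masses S j))
                                       (Cmul (f (pts S j)) (conj_cutoff f s (Rb S) (pts S j))))).
Proof.
  intros Hs. apply Csum_fst_nonneg. intros j Hj.
  pose proof (atoms_below j Hj). pose proof (masses_nonneg S j Hj).
  unfold conj_cutoff. split_branches. simpl. pose proof (sq_norm_nonneg (f (pts S j))).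
  unfold sq_norm in *. nra.
Qed.

(** If [f] satisfies a Dirichlet or Neumann condition at
    [0] and its components are the profiles [expo k s P_c Q_c] on [[s, R]],
    then the energy [int_0^s |f'|^2] is at most [k (|P|^2 - |Q|^2)]:
    the boundary flux at [s] pays for the energy, the mass terms only
    diminish it. *)
Lemma energy_estimate s P1 Q1 P2 Q2 : (d = RtoC 0 \/ f 0 = RtoC 0) -> s0 < s < Rb S ->
  (forall t, s <= t <= Rb S -> fst (f t) = expo (y * b) s P1 Q1 t) ->
  (forall t, s <= t <= Rb S -> snd (f t) = expo (y * b) s P2 Q2 t) ->
  exists A0 : R, is_RInt (fun t => sq_norm (fp t)) 0 s A0 /\ 0 <= A0 /\
    A0 <= (y * b) * (P1 * P1 + P2 * P2 - (Q1 * Q1 + Q2 * Q2)).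
Proof.
  intros Hd Hs Hf1 Hf2. destruct sol as [H1f Heq].
  destruct (Heq (conj_cutoff f s (Rb S)) (conj_cutoff' fp f s (Rb S)) (Rb S) ltac:(lra)
              (conj_cutoff_H1 f fp s (Rb S) H1f ltac:(lra))) as (A & B & D & HA & HB & HD & E).
  { intros x Hx. unfold conj_cutoff. split_branches; [|reflexivity].
    replace x with (Rb S) by lra. apply Cx_ext; simpl; field; lra. }
  pose proof (weak_equation_parts _ _ _ _ _ _ _ E true) as Er. clear E.
  assert (E0 : part true (Cmul d (conj_cutoff f s (Rb S) 0)) = 0).
  { unfold conj_cutoff. split_branches. destruct Hd as [-> | ->]; simpl; ring. }
  assert (EB : part true (Cmul (0, y) (Copp B)) = 0).
  { simpl. rewrite (cutoff_potential_imag s B Hs HB). ring. }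
  rewrite E0, EB in Er. cbv beta iota delta [part] in Er.
  pose proof (atoms_conj_nonneg s ltac:(lra)).
  destruct (cutoff_flux f fp s (Rb S) A H1f ltac:(lra) HA) as (A0 & HA0 & EA).
  destruct (cutoff_mass s P1 Q1 P2 Q2 D Hs Hf1 Hf2 HD) as (D0 & HD0 & ED).
  exists A0. split; [exact HA0|]. split.
  - exact (rint_nonneg _ 0 s A0 ltac:(lra) (fun x _ => sq_norm_nonneg (fp x)) HA0).
  - rewrite (Hf1 s), (Hf2 s), (Hf1 (Rb S)), (Hf2 (Rb S)), !expo_at_base in EA by lra.
    rewrite EA, ED in Er.
    set (E1 := expo (y * b) s P1 Q1 (Rb S)) in Er. set (E2 := expo (y * b) s P2 Q2 (Rb S)) in Er.
    set (Sg := fst (Csum _ _)) in Er, H.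
    assert (Key : ((P1 + Q1) * (E1 - (P1 + Q1)) + (P2 + Q2) * (E2 - (P2 + Q2))) / (Rb S - s)
      - y * y * (b * b / (Rb S - s) *
         ((P1 + Q1) * ((E1 - (P1 + Q1) - y * b * (P1 - Q1) * (Rb S - s)) / (y * b * (y * b)))
        + (P2 + Q2) * ((E2 - (P2 + Q2) - y * b * (P2 - Q2) * (Rb S - s)) / (y * b * (y * b)))))
      = y * b * (P1 * P1 + P2 * P2 - (Q1 * Q1 + Q2 * Q2))).
    { field. split; [nra | lra]. }
    assert (0 <= y * y * (D0 + Sg)) by (apply Rmult_le_pos; nra).
    lra.
Qed.

(** A solution with zero energy on [[0, s]] and [f(s) = 0]
    vanishes on [[0, s]]; testing with a short ramp at [0] then shows that
    its datum [f'(0-)] vanishes too.  The only term that needs care is the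
    potential term, where [f'] appears: it integrates to zero against the
    square integrable [w * ramp] because [f'] has zero energy. *)
Lemma ramp_potential_term s t1 a0 dl B : 0 < dl -> dl < t1 -> dl < s ->
  (forall x, 0 < x < t1 -> wf S x = a0) ->
  is_RInt (fun t => sq_norm (fp t)) 0 s 0 -> (forall x, 0 <= x <= s -> f x = RtoC 0) ->
  CInt (fun x => Cmul (RtoC (wf S x)) (Cadd (Cmul (fp x) (RtoC (ramp dl x)))
                                            (Cmul (f x) (RtoC (ramp' dl x))))) 0 dl B ->
  snd B = 0.
Proof.
  intros Hdl Hdl1 Hdl2 Hw IW Hz HB. pose proof (CInt_part _ _ _ _ HB false) as HBc.
  assert (IG : is_RInt (fun x => (a0 * ramp dl x) * (a0 * ramp dl x)) 0 dl
                 (RInt.RInt (fun x => (a0 * ((dl - x) / dl)) * (a0 * ((dl - x) / dl))) 0 dl)).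
  { eapply rint_ext; [lra| |apply (RInt_correct (V := R_CompleteNormedModule));
                         apply (ex_RInt_continuous (V := R_CompleteNormedModule))].
    - intros x Hx. unfold ramp. split_branches.
    - intros z _. apply (ex_derive_continuous (K := R_AbsRing) (V := R_NormedModule)).
      auto_derive. lra. }
  eapply (integral_mul_vanishes (fun t => snd (fp t)) (fun t => sq_norm (fp t))
            (fun x => a0 * ramp dl x) 0 dl); [lra| | |exact IG|].
  - intros x _. unfold sq_norm. nra.
  - apply (rint_sub_interval _ 0 s); [lra | lra | intros; apply sq_norm_nonneg | exact IW].
  - eapply rint_ext; [lra| |exact HBc]. intros x Hx. cbv beta.
    rewrite (Hw x), (Hz x) by lra. simpl. ring.
Qed.

Lemma vanishing_start_datum s t1 a0 : s0 < s -> 0 < t1 -> (forall x, 0 < x < t1 -> wf S x = a0) ->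
  is_RInt (fun t => sq_norm (fp t)) 0 s 0 -> (forall x, 0 <= x <= s -> f x = RtoC 0) ->
  fst d = 0.
Proof.
  intros Hs Ht1 Hw IW Hz. destruct sol as [H1f Heq].
  set (dl := Rmin t1 s / 2).
  assert (Hdl : 0 < dl) by (unfold dl; apply Rmin_case; lra).
  assert (Hdl1 : dl < t1) by (unfold dl; pose proof (Rmin_l t1 s); lra).
  assert (Hdl2 : dl < s) by (unfold dl; pose proof (Rmin_r t1 s); lra).
  destruct (Heq (fun t => RtoC (ramp dl t)) (fun t => RtoC (ramp' dl t)) dl ltac:(lra)
              (ramp_H1 dl Hdl)) as (A & B & D & HA & HB & HD & E).
  { intros x Hx. unfold ramp. split_branches; [|reflexivity].
    replace x with dl by lra. apply Cx_ext; simpl; field; lra. }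
  pose proof (weak_equation_parts _ _ _ _ _ _ _ E true) as Er. clear E.
  rewrite Csum_part_zero in Er.
  2:{ intros j Hj. pose proof (pts_range S j Hj). pose proof (atoms_below j Hj).
      rewrite Hz by lra. apply Cx_ext; simpl; ring. }
  assert (EA : part true A = 0).
  { replace 0 with (-1 / dl * (part true (f dl) - part true (f 0))) by (rewrite !Hz by lra; simpl; ring).
    eapply (rint_ext_val _ (fun t => -1 / dl * part true (fp t)) 0 dl);
      [lra| |exact (CInt_part _ _ _ _ HA true)|].
    - intros x Hx. cbv beta. rewrite part_mul_real_r. unfold ramp'. split_branches; ring.
    - apply rint_scal, (H1loc_ftc f fp H1f); lra. }
  assert (ED : part true D = 0).
  { pose proof (CInt_part _ _ _ _ HD true) as HDc.
    apply (rint_const_on_val _ 0 dl 0 _ ltac:(lra)) in HDc; [lra|].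
    intros x Hx. cbv beta. rewrite Hz by lra. simpl. ring. }
  pose proof (ramp_potential_term s t1 a0 dl B Hdl Hdl1 Hdl2 Hw IW Hz HB) as EB.
  assert (Eh : part true (Cmul d (RtoC (ramp dl 0))) = fst d)
    by (unfold ramp; split_branches; simpl; field; lra).
  rewrite Eh, EA, ED in Er. simpl in Er. rewrite EB in Er. lra.
Qed.

Lemma nondegenerate s t1 a0 : ((d = RtoC 0 /\ f 0 = RtoC 1) \/ (d = RtoC 1 /\ f 0 = RtoC 0)) ->
  s0 < s -> 0 < t1 -> (forall x, 0 < x < t1 -> wf S x = a0) ->
  is_RInt (fun t => sq_norm (fp t)) 0 s 0 -> f s <> RtoC 0.
Proof.
  intros Hd Hs Ht1 Hw IW Fs. destruct sol as [H1f _].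
  pose proof (constant_of_zero_energy f fp s H1f IW) as Hc.
  assert (Hz : forall x, 0 <= x <= s -> f x = RtoC 0).
  { intros x Hx. apply Cx_ext.
    - change (part true (f x) = part true (RtoC 0)). rewrite (Hc true x Hx), <- (Hc true s), Fs; [reflexivity | lra].
    - change (part false (f x) = part false (RtoC 0)). rewrite (Hc false x Hx), <- (Hc false s), Fs; [reflexivity | lra]. }
  destruct Hd as [[_ Hf0] | [Hd1 _]].
  - rewrite Hz in Hf0 by lra. injection Hf0. lra.
  - pose proof (vanishing_start_datum s t1 a0 Hs Ht1 Hw IW Hz). rewrite Hd1 in H. simpl in H. lra.
Qed.

(** The quasi-derivative at [R] is the derivative of the exponential
    profile, since there is no potential on the tail. *)
Lemma quasi_derivative_tail g s c P Q : s0 < s < Rb S -> quasi_deriv S (0, y) f g ->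
  (forall t, s <= t <= Rb S -> part c (f t) = expo (y * b) s P Q t) ->
  part c (g (Rb S)) = expo (y * b) s (y * b * P) (- (y * b * Q)) (Rb S).
Proof.
  intros Hs [Hlc Hint] Hf.
  apply (derivative_of_left_integral (expo (y * b) s P Q) (fun t => part c (g t)) (Rb S) s);
    [lra | | |apply is_derive_Reals, expo_derive].
  - intros t Ht. destruct (Hint t (Rb S) ltac:(lra)) as (J & HJ & HG).
    assert (HJ0 : forall c', part c' J = 0).
    { intros c'. pose proof (CInt_part _ _ _ _ HJ c') as HJc.
      apply (rint_const_on_val _ t (Rb S) 0) in HJc; [lra | lra |].
      intros x Hx. cbv beta. rewrite part_mul_real_l, tail_free by lra. ring. }
    rewrite <- (Hf (Rb S)), <- (Hf t) by lra.
    eapply rint_eq_val; [|exact (CInt_part _ _ _ _ HG c)].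
    pose proof (HJ0 true) as J1. pose proof (HJ0 false) as J2.
    destruct c; simpl in *; rewrite J1, J2; ring.
  - intros e He. destruct (Hlc (Rb S) ltac:(lra) e He) as (del & Hdel & Hc).
    exists del. split; [exact Hdel|]. intros t Ht.
    rewrite <- part_sub. eapply Rle_lt_trans; [apply part_le_norm | now apply Hc].
Qed.

(** The coefficients of a solution with Dirichlet or Neumann data satisfy
    [|Q| <= |P|] and [P <> 0]: by the energy estimate, and since [P = Q = 0]
    would make the energy and [f(s)] vanish. *)
Lemma tail_coefficients s t1 a0 P1 Q1 P2 Q2 :
  ((d = RtoC 0 /\ f 0 = RtoC 1) \/ (d = RtoC 1 /\ f 0 = RtoC 0)) -> s0 < s < Rb S ->
  0 < t1 -> (forall x, 0 < x < t1 -> wf S x = a0) ->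
  (forall t, s <= t <= Rb S -> fst (f t) = expo (y * b) s P1 Q1 t) ->
  (forall t, s <= t <= Rb S -> snd (f t) = expo (y * b) s P2 Q2 t) ->
  0 < P1 * P1 + P2 * P2 /\ Q1 * Q1 + Q2 * Q2 <= P1 * P1 + P2 * P2.
Proof.
  intros Hd Hs Ht1 Hw Hf1 Hf2.
  destruct (energy_estimate s P1 Q1 P2 Q2 ltac:(destruct Hd as [[? _] | [_ ?]]; auto) Hs Hf1 Hf2)
    as (A0 & HA0 & HA0p & HA0le).
  assert (Hk : 0 < y * b) by nra.
  assert (HQ : Q1 * Q1 + Q2 * Q2 <= P1 * P1 + P2 * P2).
  { destruct (Rle_dec (Q1 * Q1 + Q2 * Q2) (P1 * P1 + P2 * P2)); [assumption | nra]. }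
  split; [|exact HQ].
  destruct (Req_dec (P1 * P1 + P2 * P2) 0) as [E|E]; [exfalso|nra].
  assert (P1 = 0 /\ P2 = 0) as [-> ->] by nra.
  assert (Q1 = 0 /\ Q2 = 0) as [-> ->] by nra.
  assert (A0 = 0) as -> by nra.
  apply (nondegenerate s t1 a0 Hd ltac:(lra) Ht1 Hw HA0).
  apply Cx_ext; [rewrite (Hf1 s) | rewrite (Hf2 s)]; try lra; rewrite expo_at_base; simpl; ring.
Qed.

Lemma tail_ratio_estimate g s t1 a0 :
  ((d = RtoC 0 /\ f 0 = RtoC 1) \/ (d = RtoC 1 /\ f 0 = RtoC 0)) -> s0 < s < Rb S ->
  0 < t1 -> (forall x, 0 < x < t1 -> wf S x = a0) -> 1 <= y * b * (Rb S - s) ->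
  quasi_deriv S (0, y) f g ->
  Cnorm (Csub (Cdiv (g (Rb S)) (Cmul (0, y) (f (Rb S)))) (0, - b))
    <= 4 * b * exp (- (2 * b * (Rb S - s)) * y).
Proof.
  intros Hd Hs Ht1 Hw HyL Hq.
  destruct (tail_exponential s true Hs) as (P1 & Q1 & Hf1). simpl in Hf1.
  destruct (tail_exponential s false Hs) as (P2 & Q2 & Hf2). simpl in Hf2.
  destruct (tail_coefficients s t1 a0 P1 Q1 P2 Q2 Hd Hs Ht1 Hw Hf1 Hf2) as [HP HQ].
  pose proof (quasi_derivative_tail g s true P1 Q1 Hs Hq Hf1) as G1. simpl in G1.
  pose proof (quasi_derivative_tail g s false P2 Q2 Hs Hq Hf2) as G2. simpl in G2.
  set (X := exp (y * b * (Rb S - s))).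
  assert (HX2 : 2 < X).
  { pose proof (exp_ineq1 1 ltac:(lra)). unfold X.
    destruct (Req_dec 1 (y * b * (Rb S - s))) as [E|E]; [rewrite <- E; lra|].
    pose proof (exp_increasing 1 (y * b * (Rb S - s)) ltac:(lra)). lra. }
  assert (Ef : f (Rb S) = (P1 * X + Q1 / X, P2 * X + Q2 / X)).
  { apply Cx_ext; [rewrite (Hf1 (Rb S)) | rewrite (Hf2 (Rb S))]; try lra; apply expo_at. }
  assert (Eg : g (Rb S) = (y * b * (P1 * X - Q1 / X), y * b * (P2 * X - Q2 / X))).
  { apply Cx_ext; [rewrite G1 | rewrite G2]; rewrite expo_at; fold X; simpl; unfold Rdiv; ring. }
  assert (Ee : exp (- (2 * b * (Rb S - s)) * y) = / (X * X)).
  { unfold X. rewrite <- exp_plus, <- exp_Ropp. f_equal. ring. }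
  rewrite Ef, Eg, Ee.
  replace (4 * b * / (X * X)) with (4 * b / (X * X)) by reflexivity.
  apply ratio_estimate; try assumption; nra.
Qed.

End TailSolution.

(** With [s] the midpoint of the regular tail [(s0, R)] and [L = R - s], both
    Weyl-type ratios at [R] approach [-ib] at rate [e^(-2 b L y)] as soon
    as [y b L >= 1]. *)
Theorem lemma5p1 (S : classF) (theta thetap thetaq phi phip phiq : R -> R -> Cx) :
  (forall y, 0 < y ->
     is_solution S (0, y) (theta y) (thetap y) (RtoC 0) /\
     theta y 0 = RtoC 1 /\
     quasi_deriv S (0, y) (theta y) (thetaq y)) ->
  (forall y, 0 < y ->
     is_solution S (0, y) (phi y) (phip y) (RtoC 1) /\
     phi y 0 = RtoC 0 /\
     quasi_deriv S (0, y) (phi y) (phiq y)) ->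
  exists eps c M Y : R, 0 < eps /\ 0 < c /\
    forall y, Y <= y ->
      Cnorm (Csub (Cdiv (thetaq y (Rb S)) (Cmul (0, y) (theta y (Rb S)))) (0, - c))
        <= M * exp (- eps * y) /\
      Cnorm (Csub (Cdiv (phiq y (Rb S)) (Cmul (0, y) (phi y (Rb S)))) (0, - c))
        <= M * exp (- eps * y).
Proof.
  intros Htheta Hphi.
  destruct (tail_structure S) as (s0 & b & Hs0 & Hb & Htail & Hatoms).
  destruct (head_structure S) as (t1 & a0 & Ht1 & Hhead).
  set (s := (s0 + Rb S) / 2). assert (Hs : s0 < s < Rb S) by (unfold s; lra).
  assert (HbL : 0 < b * (Rb S - s)) by (apply Rmult_lt_0_compat; lra).
  exists (2 * b * (Rb S - s)), b, (4 * b), (1 / (b * (Rb S - s))).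
  split; [nra|]. split; [exact Hb|]. intros y Hy.
  assert (Hy0 : 0 < y) by exact (Rlt_le_trans _ _ _ (Rdiv_lt_0_compat 1 _ Rlt_0_1 HbL) Hy).
  assert (HyL : 1 <= y * b * (Rb S - s)).
  { apply (Rmult_le_compat_r (b * (Rb S - s))) in Hy; [|lra].
    replace (1 / (b * (Rb S - s)) * (b * (Rb S - s))) with 1 in Hy by (field; lra). lra. }
  assert (Hfree : forall x, s0 < x < Rb S -> wf S x = 0) by (intros x Hx; apply (Htail x Hx)).
  assert (Hdens : forall x, s0 < x < Rb S -> rho S x = b) by (intros x Hx; apply (Htail x Hx)).
  destruct (Htheta y Hy0) as (Sth & Th0 & Qth).
  destruct (Hphi y Hy0) as (Sph & Ph0 & Qph).
  split.
  - exact (tail_ratio_estimate S y _ _ _ s0 b Hy0 Sth (proj1 Hs0) Hb Hfree Hdens Hatoms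
             (thetaq y) s t1 a0 (or_introl (conj eq_refl Th0)) Hs Ht1 Hhead HyL Qth).
  - exact (tail_ratio_estimate S y _ _ _ s0 b Hy0 Sph (proj1 Hs0) Hb Hfree Hdens Hatoms
             (phiq y) s t1 a0 (or_intror (conj eq_refl Ph0)) Hs Ht1 Hhead HyL Qph).
Qed.
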